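(* Let $(X,d)$ be a metric space, $\mu$ a non-atomic Borel measure on $X$, $\beta>0$, and let $\Gamma^*\subset\Gamma^\mu$ be a family of paths closed under taking non-trivial subpaths that has the $\mu$-arc-chord property with exponent $\beta$. Then every Lipschitz-$\beta$ function $f:X\to\mathbb R$ (i.e. $|f(x)-f(y)|\le L\,d(x,y)^\beta$ for all $x,y$, for some $L$) is absolutely continuous over every path of $\Gamma^*$: for every $\gamma\in\Gamma^*$ with $\mu$-arc length parametrization $\gamma_h:[0,h]\to X$, the function $f\circ\gamma_h$ is absolutely continuous on $[0,h]$.
   Context: A path is a continuous map $\gamma:[a,b]\to X$; a subpath is a restriction to a subinterval, trivial if that interval is a point; $\mathrm{Im}(\gamma)=\gamma([a,b])$. $\mu$ non-atomic: $\mu(\{x\})=0$ for all $x$. $\Gamma^\mu$ is the set of all non-trivial injective paths $\gamma$ with $0<\mu(\mathrm{Im}(\tilde\gamma))<\infty$ for every non-trivial subpath $\tilde\gamma$. For $\gamma:[a,b]\to X$ in $\Gamma^\mu$, $h=\mu(\mathrm{Im}(\gamma))$, $\nu_\gamma(x)=\mu(\gamma([a,x]))$ is a bijection $[a,b]\to[0,h]$, and $\gamma_h=\gamma\circ\nu_\gamma^{-1}$. $\Gamma^*$ has the $\mu$-arc-chord property with exponent $\beta$ if there is $C_\mu>0$ with $\mathrm{diam}(\mathrm{Im}(\gamma))^\beta\le C_\mu\,\mu(\mathrm{Im}(\gamma))$ for all $\gamma\in\Gamma^*$. *)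

From HB Require Import structures.
From mathcomp Require Import all_boot all_order all_algebra.
From mathcomp Require Import all_classical all_reals all_analysis.
Set Implicit Arguments. Unset Strict Implicit. Unset Printing Implicit Defensive.
Import Order.TTheory GRing.Theory Num.Theory.
Import numFieldNormedType.Exports.
Local Open Scope classical_set_scope.
Local Open Scope ring_scope.

(* A metric space that is nonempty (pointed); MathComp-Analysis requires a
   pointed carrier to build the (Borel) sigma-algebra generated by open sets. *)
#[short(type="pointedMetricType")]
HB.structure Definition PointedMetric (K : numDomainType) :=
  { M of Metric K M & Pointed M }.

Section Defs.
Context {R : realType} {X : pointedMetricType R}.

(* A path: a map gamma defined on the parameter interval [pa, pb] (pa <= pb);
   values of pfun outside [pa, pb] are irrelevant. *)
Record mpath := MPath { pa : R ; pb : R ; pfun : R -> X }.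

Definition is_path (g : mpath) : Prop :=
  pa g <= pb g /\ {within `[pa g, pb g], continuous (pfun g)}.

Definition pimg (g : mpath) (c d : R) : set X := pfun g @` `[c, d].
Definition Im (g : mpath) : set X := pimg g (pa g) (pb g).

Definition nontrivial (g : mpath) : Prop := pa g < pb g.

Definition injective_path (g : mpath) : Prop :=
  {in `[pa g, pb g] &, injective (pfun g)}.

Local Notation borelX := (g_sigma_algebraType (@open X)).

Definition Gamma_mu (mu : set borelX -> \bar R) (g : mpath) : Prop :=
  is_path g /\ nontrivial g /\ injective_path g /\
  forall c d, pa g <= c -> c < d -> d <= pb g ->
    (0 < mu (pimg g c d))%E /\ (mu (pimg g c d) < +oo)%E.

(* closed under taking non-trivial subpaths (up to the irrelevant values
   outside the parameter interval) *)
Definition subpath_closed (G : set mpath) : Prop :=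
  forall g, G g -> forall c d, pa g <= c -> c < d -> d <= pb g ->
    exists2 g', G g' & [/\ pa g' = c, pb g' = d &
                  {in `[c, d], forall t, pfun g' t = pfun g t}].

Definition diam (A : set X) : R :=
  sup [set mdist x y | x in A & y in A].

Definition arc_chord (mu : set borelX -> \bar R) (beta : R) (G : set mpath) :
  Prop :=
  exists2 C : R, 0 < C & forall g, G g ->
    ((diam (Im g) `^ beta)%:E <= C%:E * mu (Im g))%E.

Definition lipschitz_beta (beta : R) (f : X -> R) : Prop :=
  exists L : R, forall x y, `|f x - f y| <= L * (mdist x y `^ beta).

Definition nu (mu : set borelX -> \bar R) (g : mpath) (x : R) : R :=
  fine (mu (pimg g (pa g) x)).

Definition arc_h (mu : set borelX -> \bar R) (g : mpath) : R := fine (mu (Im g)).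

(* gamma_h = gamma o nu_gamma^{-1} : [0, h] -> X *)
Definition arc_param (mu : set borelX -> \bar R) (g : mpath) (t : R) : X :=
  pfun g (get [set x | pa g <= x <= pb g /\ nu mu g x = t]).

Definition abs_cont_on (a b : R) (F : R -> R) : Prop :=
  forall eps : R, 0 < eps -> exists2 delta : R, 0 < delta &
    forall (n : nat) (u v : 'I_n -> R),
      (forall i, a <= u i /\ u i <= v i /\ v i <= b) ->
      (forall i j, i != j -> v i <= u j \/ v j <= u i) ->
      \sum_(i < n) (v i - u i) < delta ->
      \sum_(i < n) `|F (v i) - F (u i)| < eps.

End Defs.

Notation borelX X := (g_sigma_algebraType (@open X)).

From Pilot Require Import Defs.
From HB Require Import structures.
From mathcomp Require Import all_boot all_order all_algebra.
From mathcomp Require Import all_classical all_reals all_analysis.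
From mathcomp Require Import lra.
Import Order.TTheory GRing.Theory Num.Theory.
Import numFieldNormedType.Exports.
Local Open Scope classical_set_scope.
Local Open Scope ring_scope.

(* The arc-length map nu x = mu (gamma [a, x]) is nondecreasing, additive over
   consecutive subarcs (the common endpoint is a null point) and continuous (mu is
   continuous from above and non-atomic), so by the intermediate value theorem
   every t in [0, h] is some nu x.  For s = nu x < t = nu y, the arc-chord property
   applied to the subpath over [x, y] gives
   d(gamma x, gamma y)^beta <= diam(gamma [x, y])^beta <= C (t - s), hence
   |f (gamma_h t) - f (gamma_h s)| <= L C (t - s): the function f o gamma_h is
   Lipschitz, and therefore absolutely continuous. *)

Lemma lipschitz_abs_cont {R : realType} (a b K : R) (F : R -> R) : 0 <= K ->
  (forall s t, a <= s -> s <= t -> t <= b -> `|F t - F s| <= K * (t - s)) ->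
  abs_cont_on a b F.
Proof.
move=> K0 FK eps eps0; have K1 : 0 < K + 1 by lra.
exists (eps / (K + 1)) => [|n u v uv _]; first by rewrite divr_gt0.
rewrite ltr_pdivlMr //.
have S0 : 0 <= \sum_(i < n) (v i - u i).
  by apply: sumr_ge0 => i _; have [_ [+ _]] := uv i; rewrite subr_ge0.
set S := \sum_(i < n) _ in S0 * => SK.
apply: (le_lt_trans (y := K * S)); last by nra.
rewrite mulr_sumr; apply: ler_sum => i _.
by have [? [? ?]] := uv i; apply: FK.
Qed.

Lemma closed_measurable {T : ptopologicalType} (A : set T) :
  closed A -> measurable (A : set (g_sigma_algebraType (@open T))).
Proof.
move=> cA; rewrite -(setCK A); apply: measurableC; apply: sub_sigma_algebra.
exact: closed_openC.
Qed.

Section metric_diam.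
Context {R : realType} {X : pointedMetricType R}.

Lemma mdist_continuous (p : X) : continuous (mdist p).
Proof.
move=> x; apply/cvgrPdist_lt => e e0; near=> t.
have : ball x e t by near: t; exact: nbhsx_ballx.
rewrite ballEmdist /= => xt.
have := metric_triangle p x t; have := metric_triangle p t x.
rewrite (metric_sym t x) ltr_norml; lra.
Unshelve. all: by end_near.
Qed.

Lemma mdist_le_diam (A : set X) x y : compact A -> A x -> A y ->
  mdist x y <= diam A.
Proof.
move=> cA Ax Ay; apply: sup_upper_bound; last by exists x => //; exists y.
split; first by exists (mdist x y); exists x => //; exists y.
have [q _ qmax] := compact_EVT_max (ex_intro A x Ax) cA
  (continuous_subspaceT (mdist_continuous x)).
exists (mdist x q + mdist x q) => _ [u Au [v Av <-]].
have := metric_triangle u x v; rewrite (metric_sym u x).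
have := qmax u (mem_set Au); have := qmax v (mem_set Av); lra.
Qed.

End metric_diam.

Section Gamma_mu_path.
Context {R : realType} {X : pointedMetricType R}
  {mu : {measure set (borelX X) -> \bar R}} {g : @mpath R X}.
Hypothesis mu_set1 : forall x : X, mu [set x] = 0%E.
Hypothesis Gmu_g : Gamma_mu mu g.

Local Notation a := (pa g).
Local Notation b := (pb g).
Local Notation ga := (pfun g).
Local Notation nu := (nu mu g).

Lemma pa_le_pb : a <= b.
Proof. by case: Gmu_g => -[]. Qed.

Lemma pfun_inj : {in `[a, b] &, injective ga}.
Proof. by case: Gmu_g => _ [_ []]. Qed.

Lemma compact_pimg c d : a <= c -> d <= b -> compact (pimg g c d).
Proof.
move=> ac db; have [_ cont] := Gmu_g.1.
apply: continuous_compact (@segment_compact R c d).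
apply: continuous_subspaceW cont => t /=; rewrite !in_itv /= => /andP[ct td].
by rewrite (le_trans ac ct) (le_trans td db).
Qed.

Lemma measurable_pimg c d : a <= c -> d <= b ->
  measurable (pimg g c d : set (borelX X)).
Proof.
move=> ac db; apply: closed_measurable; apply: compact_closed.
  exact: metric_hausdorff.
exact: compact_pimg.
Qed.

Lemma pimg1 c : pimg g c c = [set ga c].
Proof.
apply/seteqP; split => [_ [t + <-]|_ ->] /=.
  by rewrite /= in_itv /= => /le_anti ->.
by exists c; rewrite //= in_itv /= lexx.
Qed.

Lemma pimg_setU c e d : c <= e -> e <= d ->
  pimg g c d = pimg g c e `|` pimg g e d.
Proof.
move=> ce ed; apply/seteqP; split => [_ [t + <-]|_ [] [t + <-]] /=;
  rewrite /= !in_itv /= => /andP[t1 t2].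
- have [te|et] := leP t e; [left|right]; exists t => //; rewrite /= in_itv /=.
    by rewrite t1 te.
  by rewrite (ltW et) t2.
- by exists t => //=; rewrite in_itv /= t1 (le_trans t2 ed).
- by exists t => //=; rewrite in_itv /= t2 (le_trans ce t1).
Qed.

Lemma pimg_setI c e d : a <= c -> c <= e -> e <= d -> d <= b ->
  pimg g c e `&` pimg g e d = [set ga e].
Proof.
move=> ac ce ed db; apply/seteqP; split => [_ [[t + <-] [s + st]]|_ ->] /=.
  rewrite /= !in_itv /= => /andP[ct te] /andP[es sd].
  have ts : t = s by apply: pfun_inj; rewrite // !in_itv /=; apply/andP; split; lra.
  by rewrite ts (@le_anti _ _ s e) // es -ts te.
by split; exists e; rewrite //= in_itv /= lexx ?ce ?ed.
Qed.

Lemma mu_pimg_fin c d : a <= c -> c <= d -> d <= b ->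
  mu (pimg g c d) \is a fin_num.
Proof.
move=> ac cd db; rewrite ge0_fin_numE ?measure_ge0 //.
have [<-|ncd] := eqVneq c d; first by rewrite pimg1 mu_set1 ltey.
have [_ [_ [_ Gfin]]] := Gmu_g.
by have [] := Gfin c d ac (_ : c < d) db; rewrite // lt_neqAle ncd.
Qed.

Lemma mu_pimg_add c e d : a <= c -> c <= e -> e <= d -> d <= b ->
  mu (pimg g c d) = (mu (pimg g c e) + mu (pimg g e d))%E.
Proof.
move=> ac ce ed db.
have mce : measurable (pimg g c e : set (borelX X)).
  by apply: measurable_pimg => //; exact: le_trans db.
have med : measurable (pimg g e d : set (borelX X)).
  by apply: measurable_pimg => //; exact: le_trans ce.
have fce : (mu (pimg g c e) < +oo)%E.
  by rewrite -ge0_fin_numE ?measure_ge0 // mu_pimg_fin // (le_trans ed).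
rewrite (@pimg_setU c e d ce ed) (measureUfinl mce med fce).
by rewrite (@pimg_setI c e d ac ce ed db) mu_set1 sube0.
Qed.

Lemma nuB c d : a <= c -> c <= d -> d <= b -> nu d - nu c = fine (mu (pimg g c d)).
Proof.
move=> ac cd db; rewrite /Defs.nu (@mu_pimg_add a c d) ?lexx ?(le_trans ac cd) //.
rewrite fineD ?mu_pimg_fin ?lexx ?(le_trans ac cd) ?(le_trans cd db) //.
by rewrite addrAC subrr add0r.
Qed.

Lemma nu_le c d : a <= c -> c <= d -> d <= b -> nu c <= nu d.
Proof. by move=> ac cd db; rewrite -subr_ge0 nuB // fine_ge0 // measure_ge0. Qed.

Lemma nu_pa : nu a = 0.
Proof. by rewrite /Defs.nu pimg1 mu_set1. Qed.

Lemma nu_oscillation x eps : a <= x <= b -> 0 < eps ->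
  exists2 delta, 0 < delta &
    nu (Num.min b (x + delta)) - nu (Num.max a (x - delta)) < eps.
Proof.
(* mu is continuous from above along the shrinking images F n, whose
   intersection is the null set [set ga x]. *)
move=> /andP[ax xb] eps0.
pose w n : R := n.+1%:R^-1; have w0 n : 0 < w n by rewrite invr_gt0.
pose l n := Num.max a (x - w n); pose r n := Num.min b (x + w n).
have lr n : [/\ a <= l n, l n <= x, x <= r n & r n <= b].
  by split; rewrite ?le_max ?ge_max ?le_min ?ge_min ?lexx ?ax ?xb ?gerBl ?lerDl
    ?(ltW (w0 n)).
pose F n := pimg g (l n) (r n).
have mF n : measurable (F n : set (borelX X)).
  by have [? _ _ ?] := lr n; exact: measurable_pimg.
have F0fin : (mu (F 0%N) < +oo)%E.
  have [? ? ? ?] := lr 0%N.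
  by rewrite -ge0_fin_numE ?measure_ge0 // mu_pimg_fin // (le_trans _ (_ : x <= _)).
have F_nonincr : nonincreasing_seq F.
  move=> n m nm; rewrite subsetEset => _ [t + <-].
  rewrite /= in_itv /= => /andP[lt tr].
  have wmn : w m <= w n by rewrite lef_pV2 ?posrE ?ler_nat.
  exists t => //=; rewrite in_itv /=; apply/andP; split.
    by apply: le_trans lt; rewrite le_max2 // lerD2l lerN2.
  by apply: (le_trans tr); rewrite le_min2 // lerD2l.
have capF : \bigcap_n F n = [set ga x].
  apply/seteqP; split => [y Fy|_ -> n _]; last first.
    by have [? ? ? ?] := lr n; exists x; rewrite //= in_itv /=; apply/andP.
  have [t0 + t0y] := Fy 0%N I; rewrite /= in_itv /= => /andP[l0t0 t0r0].
  have [lr0 _ _ rr0] := lr 0%N.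
  have t0_in n : l n <= t0 <= r n.
    have [t + ty] := Fy n I; rewrite /= in_itv /= => /andP[lt tr].
    have [? ? ? ?] := lr n.
    suff <- : t = t0 by rewrite lt tr.
    by apply: pfun_inj; rewrite ?ty ?t0y // !in_itv /=; apply/andP; split; lra.
  rewrite /= -t0y; congr ga; have [x_t0|t0_x|//] := ltgtP x t0.
  - have [k xk] := ltr_add_invr x_t0; have /andP[_] := t0_in k.
    by rewrite le_min => /andP[_]; rewrite leNgt xk.
  - have [k xk] := ltr_add_invr t0_x; have /andP[] := t0_in k.
    by rewrite ge_max => /andP[_]; rewrite lerBlDr leNgt xk.
have mcapF : measurable (\bigcap_n F n : set (borelX X)).
  by rewrite capF -pimg1; apply: measurable_pimg.
have mu_lim := nonincreasing_cvg_mu F0fin mF mcapF F_nonincr.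
apply: contrapT => /forall2NP small.
suff : (eps%:E <= mu [set ga x])%E by rewrite mu_set1 lee_fin leNgt eps0.
rewrite -capF; apply: (cvge_ge _ mu_lim); apply: nearW => n /=.
have [? ? ? ?] := lr n.
have lrn : l n <= r n by apply: le_trans (_ : x <= _).
rewrite -(fineK (@mu_pimg_fin (l n) (r n) _ lrn _)) // lee_fin -nuB //.
by case: (small (w n)) => [/(_ (w0 n))|/negP]; rewrite ?leNgt.
Qed.

Lemma nu_continuous : {within `[a, b], continuous nu}.
Proof.
apply/subspace_continuousP => x /=; rewrite in_itv /= => xab.
apply/cvgrPdist_lt => eps eps0.
have [delta delta0 osc] := nu_oscillation x eps xab eps0.
apply/nbhs_ballP; exists delta => //= t; rewrite -ball_normE /= => xt.
rewrite in_itv /= => tab.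
have near_le y : a <= y <= b -> `|x - y| < delta ->
    nu (Num.max a (x - delta)) <= nu y <= nu (Num.min b (x + delta)).
  move=> /andP[ay yb]; rewrite ltr_norml => /andP[xy1 xy2].
  have ly : Num.max a (x - delta) <= y by rewrite ge_max ay /=; lra.
  have yr : y <= Num.min b (x + delta) by rewrite le_min yb /=; lra.
  by apply/andP; split; [apply: nu_le ly yb|apply: nu_le ay yr _];
    rewrite ?le_max ?ge_min lexx.
have := near_le x xab; rewrite subrr normr0 => /(_ delta0) /andP[x1 x2].
have /andP[t1 t2] := near_le t tab xt.
rewrite /from_subspace ltr_norml; apply/andP; split; lra.
Qed.

Lemma nu_surj t : 0 <= t <= arc_h mu g -> exists2 x, a <= x <= b & nu x = t.
Proof.
move=> /andP[t0 th]; have ab := pa_le_pb.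
have h0 : nu a <= nu b by apply: nu_le; rewrite ?lexx.
rewrite nu_pa in h0.
have [|x] := IVT ab nu_continuous (v := t).
  by rewrite nu_pa min_l ?max_r ?t0.
by rewrite in_itv /=; exists x.
Qed.

Lemma arc_paramP t : 0 <= t <= arc_h mu g ->
  exists x, [/\ a <= x <= b, nu x = t & arc_param mu g t = ga x].
Proof.
move=> /nu_surj [x xab nux].
have [] := @getPex _ [set x | a <= x <= b /\ nu x = t]; first by exists x.
by exists (get [set x | a <= x <= b /\ nu x = t]).
Qed.

End Gamma_mu_path.

Section arc_chord_lipschitz.
Context {R : realType} {X : pointedMetricType R}
  {mu : {measure set (borelX X) -> \bar R}} {beta : R} {G : set (@mpath R X)}.
Hypothesis mu_set1 : forall x : X, mu [set x] = 0%E.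
Hypothesis beta_ge0 : 0 <= beta.
Hypothesis G_Gamma_mu : forall g, G g -> Gamma_mu mu g.
Hypothesis G_subpath : subpath_closed G.
Context {C : R}.
Hypothesis G_arc_chord :
  forall g, G g -> ((diam (Defs.Im g) `^ beta)%:E <= C%:E * mu (Defs.Im g))%E.

Lemma mdist_powR_le_nu g c d : G g -> pa g <= c -> c < d -> d <= pb g ->
  mdist (pfun g c) (pfun g d) `^ beta <= C * (nu mu g d - nu mu g c).
Proof.
move=> Gg ac cd db; have Gmu_g := G_Gamma_mu _ Gg.
have [g' Gg' [pa' pb' g'_eq]] := G_subpath _ Gg _ _ ac cd db.
have Im' : Defs.Im g' = pimg g c d.
  rewrite /Defs.Im /pimg pa' pb'; apply/seteqP.
  by split => _ [t ct <-]; exists t; rewrite ?g'_eq ?inE.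
have := G_arc_chord _ Gg'.
rewrite Im' -(fineK (mu_pimg_fin mu_set1 Gmu_g _ _ ac (ltW cd) db)).
rewrite -(nuB mu_set1 Gmu_g _ _ ac (ltW cd) db) lee_fin; apply: le_trans.
have le_diam : mdist (pfun g c) (pfun g d) <= diam (pimg g c d).
  apply: mdist_le_diam; first exact: (compact_pimg Gmu_g).
    by exists c; rewrite //= in_itv /= lexx ltW.
  by exists d; rewrite //= in_itv /= lexx ltW.
by apply: ge0_ler_powR; rewrite ?nnegrE ?mdist_ge0 ?(le_trans (mdist_ge0 _ _) le_diam).
Qed.

Context {f : X -> R} {L : R}.
Hypothesis L_ge0 : 0 <= L.
Hypothesis f_holder : forall x y, `|f x - f y| <= L * (mdist x y `^ beta).

Lemma arc_param_lipschitz g s t : G g ->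
  0 <= s -> s <= t -> t <= arc_h mu g ->
  `|f (arc_param mu g t) - f (arc_param mu g s)| <= L * C * (t - s).
Proof.
move=> Gg s0 st th; have Gmu_g := G_Gamma_mu _ Gg.
have [<-|s_ne_t] := eqVneq s t; first by rewrite !subrr normr0 mulr0.
have slt : s < t by rewrite lt_neqAle s_ne_t st.
have sh : 0 <= s <= arc_h mu g by rewrite s0 (le_trans st th).
have th' : 0 <= t <= arc_h mu g by rewrite th (le_trans s0 st).
have [x [/andP[ax xb] nux ->]] := arc_paramP mu_set1 Gmu_g _ sh.
have [y [/andP[ay yb] nuy ->]] := arc_paramP mu_set1 Gmu_g _ th'.
have xy : x < y.
  rewrite ltNge; apply/negP => yx.
  by have := nu_le mu_set1 Gmu_g _ _ ay yx xb; rewrite nux nuy leNgt slt.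
rewrite -nux -nuy -mulrA; apply: le_trans (f_holder _ _) _.
by rewrite metric_sym; apply: ler_wpM2l => //; exact: mdist_powR_le_nu.
Qed.

End arc_chord_lipschitz.

Theorem lemma5p2 (R : realType) (X : pointedMetricType R)
  (mu : {measure set (borelX X) -> \bar R})
  (beta : R) (G : set (@mpath R X)) :
  (forall x : X, mu [set x] = 0%E) ->
  0 < beta ->
  (forall g, G g -> Gamma_mu mu g) ->
  subpath_closed G ->
  arc_chord mu beta G ->
  forall f : X -> R, lipschitz_beta beta f ->
  forall g, G g -> abs_cont_on 0 (arc_h mu g) (f \o arc_param mu g).
Proof.
move=> mu_set1 beta0 G_Gamma_mu G_subpath [C C0 G_arc_chord] f [L f_holder] g Gg.
have L_ge0 : 0 <= Num.max L 0 by rewrite le_max lexx orbT.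
have f_holder' x y : `|f x - f y| <= Num.max L 0 * mdist x y `^ beta.
  by apply: le_trans (f_holder x y) _; apply: ler_wpM2r; rewrite ?powR_ge0 ?le_max ?lexx.
apply: (@lipschitz_abs_cont _ _ _ (Num.max L 0 * C)).
  by apply: mulr_ge0 => //; exact: ltW.
move=> s t s0 st th /=.
exact: (arc_param_lipschitz mu_set1 (ltW beta0) G_Gamma_mu G_subpath G_arc_chord
  L_ge0 f_holder' _ _ _ Gg s0 st th).
Qed.
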